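(* Let $P$ be an $n\times n$ doubly stochastic matrix. Then $P$ is a Sarymsakov matrix if and only if $|F_P(\mathcal A)|>|\mathcal A|$ for every nonempty proper subset $\mathcal A\subsetneq\mathcal N$.
   Context: $\mathcal N=\{1,\ldots,n\}$. A matrix is stochastic if it is entrywise nonnegative with row sums $1$, and doubly stochastic if in addition its column sums are $1$. For stochastic $P$ and $\mathcal A\subseteq\mathcal N$, $F_P(\mathcal A)=\{j:\ p_{ij}>0\text{ for some } i\in\mathcal A\}$. A Sarymsakov matrix is a stochastic $P$ such that for any disjoint nonempty $\mathcal A,\tilde{\mathcal A}\subseteq\mathcal N$, either $F_P(\mathcal A)\cap F_P(\tilde{\mathcal A})\neq\emptyset$, or $F_P(\mathcal A)\cap F_P(\tilde{\mathcal A})=\emptyset$ and $|F_P(\mathcal A)\cup F_P(\tilde{\mathcal A})|>|\mathcal A\cup\tilde{\mathcal A}|$. *)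

From HB Require Import structures.
From mathcomp Require Import all_boot all_order all_algebra.
Set Implicit Arguments. Unset Strict Implicit. Unset Printing Implicit Defensive.
Import Order.TTheory GRing.Theory Num.Theory.
Local Open Scope ring_scope.

Definition stochastic (R : realFieldType) (n : nat) (P : 'M[R]_n) : Prop :=
  (forall i j, 0 <= P i j) /\ (forall i, \sum_(j < n) P i j = 1).

Definition doubly_stochastic (R : realFieldType) (n : nat) (P : 'M[R]_n) : Prop :=
  stochastic P /\ (forall j, \sum_(i < n) P i j = 1).

Definition F (R : realFieldType) (n : nat) (P : 'M[R]_n) (A : {set 'I_n}) : {set 'I_n} :=
  [set j | [exists i in A, 0 < P i j]].

Definition sarymsakov (R : realFieldType) (n : nat) (P : 'M[R]_n) : Prop :=
  stochastic P /\
  forall A At : {set 'I_n}, A != set0 -> At != set0 -> [disjoint A & At] ->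
    (F P A :&: F P At != set0) \/
    (F P A :&: F P At = set0 /\ (#|A :|: At| < #|F P A :|: F P At|)%N).

From mathcomp Require Import all_boot all_order all_algebra.
Set Implicit Arguments. Unset Strict Implicit. Unset Printing Implicit Defensive.
Import Order.TTheory GRing.Theory Num.Theory.
Local Open Scope ring_scope.

(* Mass counting: the rows indexed by A carry total mass |A|, all of it landing
   in the columns of F(A), whose total mass is |F(A)|.  The surplus
   |F(A)| - |A| is the mass flowing into F(A) from rows outside A, so F(A) is
   strictly larger than A as soon as F(A) meets F(~A).  Applied to A and its
   complement, the Sarymsakov alternative thus yields strict expansion, the
   disjoint case being impossible since |A :|: ~A| = n.  Conversely, two
   disjoint nonempty sets are both proper, and when their images are disjoint
   too, strict expansion of each adds up. *)

Section DoublyStochastic.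

Variables (R : realFieldType) (n : nat) (P : 'M[R]_n).
Hypothesis dsP : doubly_stochastic P.

Let P_ge0 i j : 0 <= P i j. Proof. by case: dsP => [[]]. Qed.

Lemma card_F_mass (A : {set 'I_n}) :
  (#|F P A|%:R : R) = #|A|%:R + \sum_(j in F P A) \sum_(i in ~: A) P i j.
Proof.
case: dsP => [[_ rowP] colP].
have rows_A : \sum_(i in A) \sum_(j in F P A) P i j = (#|A|%:R : R).
  rewrite -sum1_card natr_sum; apply: eq_bigr => i iA.
  rewrite -(rowP i) [RHS](bigID [in F P A]) /= [X in _ = _ + X]big1 ?addr0 //.
  move=> j; rewrite inE => /existsP jFA.
  apply/eqP; rewrite eq_le P_ge0 andbT leNgt; apply/negP => Pij.
  by apply: jFA; exists i; rewrite iA.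
have cols_FA : \sum_(j in F P A) \sum_i P i j = (#|F P A|%:R : R).
  by rewrite -sum1_card natr_sum; apply: eq_bigr => j _; apply: colP.
rewrite -cols_FA -rows_A [X in _ = X + _]exchange_big -big_split /=.
apply: eq_bigr => j _.
by rewrite [LHS](bigID [in A]) /=; congr (_ + _); apply: eq_bigl => i; rewrite inE.
Qed.

Lemma ltn_card_F (A : {set 'I_n}) :
  F P A :&: F P (~: A) != set0 -> (#|A| < #|F P A|)%N.
Proof.
case/set0Pn=> j; rewrite inE => /andP[jFA]; rewrite inE => /existsP[i /andP[iA Pij]].
rewrite -(ltr_nat R) card_F_mass ltrDl (bigD1 j) //= ltr_wpDr //.
  by apply: sumr_ge0 => k _; apply: sumr_ge0.
by rewrite (bigD1 i) //= ltr_wpDr //; apply: sumr_ge0.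
Qed.

End DoublyStochastic.

Lemma setC_neq0 (T : finType) (A : {set T}) : A \proper [set: T] -> ~: A != set0.
Proof. by rewrite properT; apply: contraNneq => AC0; rewrite -[A]setCK AC0 setC0. Qed.

Lemma disjoint_proper (T : finType) (A B : {set T}) :
  A != set0 -> [disjoint A & B] -> B \proper [set: T].
Proof.
move=> An0; rewrite properT disjoints_subset.
by apply: contraTneq => ->; rewrite setCT subset0.
Qed.

Lemma cardsU_disjoint (T : finType) (A B : {set T}) :
  [disjoint A & B] -> #|A :|: B| = (#|A| + #|B|)%N.
Proof. by rewrite -setI_eq0 -cardsUI => /eqP->; rewrite cards0 addn0. Qed.

Theorem lemma5 (R : realFieldType) (n : nat) (P : 'M[R]_n) :
  doubly_stochastic P ->
  (sarymsakov P <->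
   forall A : {set 'I_n}, A != set0 -> A \proper [set: 'I_n] ->
     (#|A| < #|F P A|)%N).
Proof.
move=> dsP; split.
- case=> _ sarP A An0 Aprop.
  have disjA : [disjoint A & ~: A] by rewrite disjoints_subset setCK.
  case: (sarP A (~: A) An0 (setC_neq0 Aprop) disjA) => [|[_]].
    exact: ltn_card_F.
  by rewrite setUCr cardsT card_ord ltnNge -[n in (_ <= n)%N]card_ord max_card.
- move=> expP; split; first by case: dsP.
  move=> A B An0 Bn0 disjAB.
  have [FAB0 | ] := eqVneq (F P A :&: F P B) set0; last by left.
  right; split => //.
  have disjF : [disjoint F P A & F P B] by rewrite -setI_eq0 FAB0.
  rewrite !cardsU_disjoint //.
  have Aprop : A \proper [set: 'I_n].
    by apply: (disjoint_proper Bn0); rewrite disjoint_sym.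
  have Bprop := disjoint_proper An0 disjAB.
  by rewrite -addSn leq_add ?expP // ltnW ?expP.
Qed.
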